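(* Let $f:\{1,\dots,n\}\to\{0,1\}$, let $S=\{i: f(i)=1\}$, and let $T=f(1)f(2)\cdots f(n)$ be the corresponding binary string. Then the number $z$ of factors in the LZ77 factorization of $T$ satisfies $z\le 3|S|+2$.
   Context: LZ77 factorization (greedy): start with $i=1$; while $i\le n$: if $T[i]$ is the first occurrence of its symbol, $T[i]$ is the next factor and $i\gets i+1$; otherwise take the largest $j\ge i$ such that $T[i..j]$ occurs in $T$ starting at some position $i'<i$ (overlap allowed), make $T[i..j]$ the next factor and set $i\gets j+1$. $z$ is the number of factors. *)

From mathcomp Require Import all_boot.
Set Implicit Arguments. Unset Strict Implicit. Unset Printing Implicit Defensive.

(* Greedy LZ77 factorization of a string T : seq A (positions 0-indexed;
   the paper's position i corresponds to index i-1 here). *)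
Section LZ77.
Variables (A : eqType) (T : seq A) (x0 : A).

Definition occ_at (i' i l : nat) : bool :=
  all (fun k => nth x0 T (i' + k) == nth x0 T (i + k)) (iota 0 l).

Definition lz_len (i : nat) : nat :=
  if nth x0 T i \in take i T then
    \max_(l < (size T - i).+1 | [exists i' : 'I_i, occ_at i' i l]) (l : nat)
  else 1.

Fixpoint lz_factors (fuel i : nat) : seq (nat * nat) :=
  if fuel is fuel'.+1 then
    if i < size T then (i, lz_len i) :: lz_factors fuel' (i + lz_len i)
    else [::]
  else [::].

Definition lz77 : seq (nat * nat) := lz_factors (size T) 0.
End LZ77.

Definition lz77_z (A : eqType) (x0 : A) (T : seq A) : nat := size (lz77 T x0).

(* Give position i the potential 3 * ones i + bonus i, where ones i counts the
   1s of T[i..] and bonus i is 0 if T[i] = 1, 2 if i begins a run of 0s and 1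
   if i lies strictly inside one.  A factor containing a 1 lowers 3 * ones i by
   at least 3.  A factor of 0s only that starts strictly inside a run can be
   copied from one position to its left, so it reaches the end of that run;
   either way every factor strictly lowers the potential, which starts at
   most at 3 |S| + 2. *)

From mathcomp Require Import all_boot.
From mathcomp Require Import zify.

Set Implicit Arguments. Unset Strict Implicit. Unset Printing Implicit Defensive.

Section Greedy.
Variables (A : eqType) (T : seq A) (x0 : A).

Lemma leq_lz_len i' i l :
  i' < i -> i + l <= size T -> occ_at T x0 i' i l -> l <= lz_len T x0 i.
Proof.
case: l => [//|l] lt_i'i le_il occ.
have eq_i'i : nth x0 T i' = nth x0 T i.
  by have /allP /(_ 0) := occ; rewrite !addn0 => /(_ isT) /eqP.
rewrite /lz_len ifT; last first.
  by rewrite -eq_i'i -(nth_take x0 lt_i'i) mem_nth // size_take_min; lia.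
have lt_l : l.+1 < (size T - i).+1 by lia.
apply: (leq_bigmax_cond (Ordinal lt_l)).
by apply/existsP; exists (Ordinal lt_i'i).
Qed.

Lemma lz_len_gt0 i : i < size T -> 0 < lz_len T x0 i.
Proof.
move=> lt_i; have [seen|unseen] := boolP (nth x0 T i \in take i T); last first.
  by rewrite /lz_len (negbTE unseen).
have [i' lt_i' eq_i'] := nthP x0 seen; rewrite size_take lt_i in lt_i'.
apply: (@leq_lz_len i' i 1 lt_i'); first lia.
by rewrite /occ_at /= !addn0 -eq_i' nth_take ?eqxx.
Qed.

Lemma lz_len_run i l c :
  0 < i -> i + l <= size T ->
  (forall k, i.-1 <= k < i + l -> nth x0 T k = c) -> l <= lz_len T x0 i.
Proof.
move=> i_gt0 le_il run; apply: (@leq_lz_len i.-1) => //; first lia.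
apply/allP => k; rewrite mem_iota add0n => /andP [_ lt_kl].
by rewrite !run ?eqxx //; lia.
Qed.

Lemma size_lz_factors_le (phi : nat -> nat) :
  (forall i, i < size T -> phi (i + lz_len T x0 i) < phi i) ->
  forall fuel i, size (lz_factors T x0 fuel i) <= phi i.
Proof.
move=> phi_lt; elim=> [//|fuel IH] i /=.
case: ifP => // lt_i /=.
exact: leq_ltn_trans (IH _) (phi_lt i lt_i).
Qed.

End Greedy.

Lemma nth_count0 (s : seq bool) k : count id s = 0 -> nth false s k = false.
Proof.
move=> /eqP; rewrite -leqn0 leqNgt -has_count => /hasPn s0.
case: (ltnP k (size s)) => [/(mem_nth false)/s0/negbTE // |].
exact: nth_default.
Qed.

Section BinaryPotential.
Variable T : seq bool.
Local Notation n := (size T).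
Local Notation t k := (nth false T k).

Definition ones i := count id (drop i T).

Definition zero_bonus i := if t i then 0 else if (i == 0) || t i.-1 then 2 else 1.

Definition potential i := if i < n then 3 * ones i + zero_bonus i else 0.

Lemma ones_cat_factor i l : ones i = count id (take l (drop i T)) + ones (i + l).
Proof.
by rewrite /ones -{1}(cat_take_drop l (drop i T)) count_cat drop_drop (addnC l i).
Qed.

Lemma potential_le i : potential i <= 3 * ones i + 2.
Proof.
rewrite /potential /zero_bonus; case: (i < n) => //.
by case: (t i); last case: (_ || _); lia.
Qed.

Lemma potential_gt0 i : i < n -> 0 < potential i.
Proof.
move=> lt_i; rewrite /potential /zero_bonus lt_i.
case: ifP => [t_i|_]; last by case: ifP; lia.
rewrite /ones (drop_nth false lt_i) /= t_i; lia.
Qed.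

Lemma potential_zero_factor_lt i l :
  i < n -> l = lz_len T false i -> i + l < n ->
  count id (take l (drop i T)) = 0 -> potential (i + l) < potential i.
Proof.
move=> lt_i def_l lt_il no_one.
have l_gt0 : 0 < l by rewrite def_l lz_len_gt0.
have zeros k : i <= k < i + l -> t k = false.
  move=> /andP [le_ik lt_kil]; have := nth_count0 (k - i) no_one.
  by rewrite nth_take ?nth_drop ?subnKC //; lia.
have t_i : t i = false by rewrite zeros //; lia.
have t_last : t (i + l).-1 = false by rewrite zeros //; lia.
have il_neq0 : (i + l == 0) = false by lia.
rewrite /potential lt_i lt_il /zero_bonus t_i t_last il_neq0 /=.
rewrite [ones i](ones_cat_factor i l) no_one.
case: ifP => [_|t_il]; first by case: (_ || _); lia.
case: ifP => [_|/negbT/norP [i_neq0 /negbTE t_prev]]; first lia.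
have : l.+1 <= lz_len T false i.
  have i_gt0 : 0 < i by rewrite lt0n.
  have run_in_T : i + l.+1 <= n by rewrite addnS.
  apply: (lz_len_run (c := false) i_gt0 run_in_T) => k /andP [le_k lt_k].
  case: (ltnP k i) => [lt_ki|le_ik]; first by have -> : k = i.-1 by lia.
  case: (ltnP k (i + l)) => [lt_kil|le_kil]; first by rewrite zeros ?le_ik.
  by have -> : k = i + l by lia.
by rewrite -def_l ltnn.
Qed.

Lemma potential_factor_lt i : i < n -> potential (i + lz_len T false i) < potential i.
Proof.
move=> lt_i; set l := lz_len T false i.
have [le_n|lt_il] := leqP n (i + l).
  by rewrite {1}/potential ifN ?potential_gt0 // -leqNgt.
case: (posnP (count id (take l (drop i T)))) => [no_one|has_one].
  exact: potential_zero_factor_lt.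
have le_pi : 3 * ones i <= potential i by rewrite /potential lt_i leq_addr.
have := ones_cat_factor i l; have := potential_le (i + l); lia.
Qed.

End BinaryPotential.

Theorem lemma11 (n : nat) (f : 'I_n -> bool) :
  let S := [set i | f i] in
  let T := [seq f i | i <- enum 'I_n] in
  lz77_z false T <= 3 * #|S| + 2.
Proof.
cbv zeta; set T := [seq f i | i <- enum 'I_n].
have ones_T : ones T 0 = #|[set i | f i]|.
  by rewrite /ones drop0 count_map -sum1dep_card -sum1_count big_enum_cond.
rewrite -ones_T; apply: leq_trans (potential_le T 0).
exact: size_lz_factors_le (@potential_factor_lt T) _ _.
Qed.
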